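(* Let $Z_1,Z_2,\ldots$ be data in a set $\mathbb{Z}$ and $\ell:\Theta\times\mathbb{Z}\to[0,\infty)$ a loss function. Let $\widehat\theta_n$ be an $(\varepsilon,\delta)$-AERM on $Z^n=(Z_1,\ldots,Z_n)$ for all $n$, and suppose there exists $\overline\Omega$ such that $0\le\widehat\omega_n\le\overline\Omega$ for all $n\ge0$. Then for any $n$, $$\sum_{i=1}^n\widehat\omega_{i-1}\ell(\widehat\theta_i;Z_i)\le\overline\Omega\Bigl\{H_n^{(\varepsilon)}\delta+\sum_{i=1}^n\ell(\widehat\theta_n;Z_i)\Bigr\},$$ where $H_n^{(m)}=\sum_{k=1}^n k^{-m}$ is the generalized harmonic number of order $m$.
   Context: Empirical risk $\widehat R_n(\theta)=n^{-1}\sum_{i=1}^n\ell(\theta;Z_i)$. For fixed $\varepsilon,\delta\ge0$, an $(\varepsilon,\delta)$-AERM on $Z^n$ is an estimator $\widehat\theta_n$ with $\widehat R_n(\widehat\theta_n)\le\inf_{\theta\in\Theta}\widehat R_n(\theta)+\delta/n^{1+\varepsilon}$. The $\widehat\omega_n$ are (possibly data-dependent) learning rates. *)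

From mathcomp Require Import all_boot all_order all_algebra.
From mathcomp Require Import all_classical all_reals all_analysis.
Set Implicit Arguments. Unset Strict Implicit. Unset Printing Implicit Defensive.
Import Order.TTheory GRing.Theory Num.Theory.
Local Open Scope ring_scope.
Local Open Scope classical_set_scope.

(* Empirical risk  R_n(theta) = n^{-1} sum_{i=1}^n loss theta (Z_i);
   the data sequence Z is indexed from 1 (Z 0 is unused). *)
Definition emp_risk {R : realType} {Theta Zt : Type}
  (loss : Theta -> Zt -> R) (Z : nat -> Zt) (n : nat) (th : Theta) : R :=
  (n%:R)^-1 * \sum_(1 <= i < n.+1) loss th (Z i).

Definition is_AERM {R : realType} {Theta Zt : Type}
  (loss : Theta -> Zt -> R) (Z : nat -> Zt) (eps delta : R) (n : nat)
  (th_hat : Theta) : Prop :=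
  emp_risk loss Z n th_hat <=
    inf (range (emp_risk loss Z n)) + delta / (n%:R `^ (1 + eps)).

Definition gen_harmonic {R : realType} (m : R) (n : nat) : R :=
  \sum_(1 <= k < n.+1) (k%:R `^ m)^-1.

From mathcomp Require Import all_boot all_order all_algebra.
From mathcomp Require Import all_classical all_reals all_analysis.
Import Order.TTheory GRing.Theory Num.Theory.
Local Open Scope ring_scope.

(* "Be the leader": an approximate minimiser of the cumulative loss on the
   first k points loses, on each new point, at most what the next minimiser
   gains, up to the optimisation slack.  Telescoping over k bounds the
   sequential loss of the estimators by the cumulative loss of the last one
   plus the total slack; for an (eps,delta)-AERM the slack at time k is
   k * delta / k^(1+eps) = delta / k^eps, whose sum is H_n^(eps) delta. *)

Lemma mulr_powR1DV (R : realType) (x e : R) :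
  0 < x -> x / x `^ (1 + e) = (x `^ e)^-1.
Proof.
move=> x0; rewrite powRD ?(gt_eqF x0) ?implybT // powRr1 ?ltW //.
by rewrite invfM mulrA mulfV ?gt_eqF // mul1r.
Qed.

Section BeTheLeader.
Variables (R : realType) (Theta Zt : Type).
Variables (loss : Theta -> Zt -> R) (Z : nat -> Zt).

Definition cum_loss (n : nat) (th : Theta) : R :=
  \sum_(1 <= i < n.+1) loss th (Z i).

Lemma cum_lossS n th : cum_loss n.+1 th = cum_loss n th + loss th (Z n.+1).
Proof. by rewrite /cum_loss big_nat_recr. Qed.

Lemma be_the_leader (th_hat : nat -> Theta) (slack : nat -> R) :
  (forall k th, (1 <= k)%N ->
     cum_loss k (th_hat k) <= cum_loss k th + slack k) ->
  forall n th,
    \sum_(1 <= i < n.+1) loss (th_hat i) (Z i)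
      <= cum_loss n th + \sum_(1 <= k < n.+1) slack k.
Proof.
move=> leader; elim=> [|n IHn] th; first by rewrite /cum_loss !big_geq ?addr0.
rewrite [leLHS]big_nat_recr //= [in leRHS]big_nat_recr //=.
have IHn_next := lerD (IHn (th_hat n.+1)) (lexx (loss (th_hat n.+1) (Z n.+1))).
apply: (le_trans IHn_next).
rewrite addrAC -cum_lossS addrA [leRHS]addrAC lerD2r.
exact: leader.
Qed.

Hypothesis loss_ge0 : forall th z, 0 <= loss th z.

Lemma inf_emp_risk_le n th : inf (range (emp_risk loss Z n)) <= emp_risk loss Z n th.
Proof.
apply: ge_inf; last by exists th.
exists 0 => _ [t _ <-]; rewrite /emp_risk mulr_ge0 ?invr_ge0 ?ler0n //.
by apply: sumr_ge0 => i _; apply: loss_ge0.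
Qed.

Lemma AERM_cum_loss eps delta n th_n th :
  (1 <= n)%N -> is_AERM loss Z eps delta n th_n ->
  cum_loss n th_n <= cum_loss n th + delta / n%:R `^ eps.
Proof.
move=> n_gt0 aerm; have n0 : 0 < n%:R :> R by rewrite ltr0n.
have := le_trans aerm (lerD (inf_emp_risk_le n th) (lexx _)).
rewrite /emp_risk -!/(cum_loss n _) -(ler_pM2l n0) mulrDr !mulVKf ?gt_eqF //.
by rewrite mulrCA mulr_powR1DV.
Qed.

End BeTheLeader.

Theorem lemma3 (R : realType) (Theta Zt : Type)
  (loss : Theta -> Zt -> R) (Z : nat -> Zt) (eps delta : R)
  (th_hat : nat -> Theta) (omega : nat -> R) (Omega_bar : R) :
  0 <= eps -> 0 <= delta ->
  (forall th z, 0 <= loss th z) ->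
  (forall n, (1 <= n)%N -> is_AERM loss Z eps delta n (th_hat n)) ->
  (forall n, 0 <= omega n <= Omega_bar) ->
  forall n : nat,
    \sum_(1 <= i < n.+1) omega i.-1 * loss (th_hat i) (Z i) <=
    Omega_bar * (gen_harmonic eps n * delta
                 + \sum_(1 <= i < n.+1) loss (th_hat n) (Z i)).
Proof.
move=> _ _ loss_ge0 aerm omega_bound n.
have Omega_ge0 : 0 <= Omega_bar by have /andP[/le_trans] := omega_bound 0%N; apply.
have weighted_le : \sum_(1 <= i < n.+1) omega i.-1 * loss (th_hat i) (Z i)
    <= Omega_bar * \sum_(1 <= i < n.+1) loss (th_hat i) (Z i).
  rewrite mulr_sumr; apply: ler_sum => i _.
  by apply: ler_wpM2r; [exact: loss_ge0 | case/andP: (omega_bound i.-1)].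
apply: (le_trans weighted_le); rewrite addrC ler_wpM2l //.
have -> : gen_harmonic eps n * delta = \sum_(1 <= k < n.+1) delta / k%:R `^ eps.
  by rewrite /gen_harmonic mulr_suml; apply: eq_bigr => k _; rewrite mulrC.
apply: be_the_leader => k th k_gt0.
by apply: AERM_cum_loss => //; apply: aerm.
Qed.
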